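(* Each of the following families of curves is a space-like solution to the mean curvature flow in $\mathbf R^{1,1}$: \begin{itemize} \item $\cosh x = e^{-t}\cosh y$, $t>0$; \item $\cosh x = e^{-t}\sinh y$, $t\in\mathbf R$; \item $\sinh x = e^{-t}\sinh y$, $t<0$; \item $\sin y = e^{-t}\sin x$, $t>0$. \end{itemize}
   Context: $\mathbf R^{1,1}$ is $\mathbf R^2$ with $\langle (x_1,y_1),(x_2,y_2)\rangle = x_1x_2-y_1y_2$. A curve is space-like if its tangent vectors $v$ satisfy $\langle v,v\rangle>0$. With Minkowski arc-length $s$, $T=X_s$, $N$ the reflection of $T$ across the line $y=x$, and $k$ defined by $T_s=kN$, a family of curves moves by mean curvature flow if $\langle\partial_tX,N\rangle=-k$ (equivalently, locally as graphs $y=y(x,t)$ with $|y_x|<1$: $y_t = y_{xx}/(1-y_x^2)$). *)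

From Stdlib Require Import Reals.
From Coquelicot Require Import Coquelicot.
Open Scope R_scope.

(* A time-dependent family of plane curves: C t is the set of points (x,y)
   of the curve at time t, for t in the time domain I. *)

Definition graph_MCF (u : R -> R -> R) (a b e f : R) : Prop :=
  exists ux uxx ut : R -> R -> R,
    forall x t, a < x < b -> e < t < f ->
      is_derive (fun z => u z t) x (ux x t) /\
      is_derive (fun z => ux z t) x (uxx x t) /\
      is_derive (fun s => u x s) t (ut x t) /\
      Rabs (ux x t) < 1 /\
      ut x t = uxx x t / (1 - (ux x t) ^ 2).

Definition spacelike_MCF (I : R -> Prop) (C : R -> R -> R -> Prop) : Prop :=
  (forall t, I t -> exists x y, C t x y) /\
  forall t0 x0 y0, I t0 -> C t0 x0 y0 ->
    exists (a b c d e f : R) (u : R -> R -> R),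
      a < x0 < b /\ c < y0 < d /\ e < t0 < f /\
      (forall t, e < t < f -> I t) /\
      graph_MCF u a b e f /\
      (forall x t, a < x < b -> e < t < f -> c < u x t < d) /\
      (forall x y t, a < x < b -> c < y < d -> e < t < f ->
         (C t x y <-> y = u x t)).

From Stdlib Require Import Reals Lra.
From Coquelicot Require Import Coquelicot.
Open Scope R_scope.

(* Each curve is a level set F(y) = k(t) g(x) with F in {cosh, sinh, sin} and
   k(t) = exp(σ t), where F'' = σ F, g'' = σ g and k' = σ k for one sign σ.
   Near a point, y = Φ(k g) for a branch Φ of the inverse of F; with
   P = F' ∘ Φ one has Φ' = 1/P and P' = σ w / P, and substituting into
   y_t = y_xx / (1 - y_x^2) turns both sides into σ k g / P, so the flow
   equation holds identically.  Space-likeness |y_x| < 1 amounts to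
   (k g')^2 < P(k g)^2, which is what restricts the time intervals. *)

Lemma sign_cases s : s * s = 1 -> s = 1 \/ s = -1.
Proof.
  intros Hs. assert (H : (s - 1) * (s + 1) = 0) by lra.
  apply Rmult_integral in H. lra.
Qed.

Lemma sign_mul_sign s a : s * s = 1 -> s * (s * a) = a.
Proof. intros Hs. rewrite <- Rmult_assoc, Hs. ring. Qed.

Lemma sign_mul_inv s z : s * s = 1 -> s * / z = / (s * z).
Proof.
  intros Hs. destruct (sign_cases s Hs) as [-> | ->].
  - now rewrite !Rmult_1_l.
  - replace (-1 * z) with (- z) by ring. rewrite Rinv_opp. ring.
Qed.

Lemma sqr_signed_sqrt s q : s * s = 1 -> 0 <= q -> (s * sqrt q) ^ 2 = q.
Proof.
  intros Hs Hq. rewrite Rpow_mult_distr, pow2_sqrt by exact Hq.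
  transitivity ((s * s) * q); [ring | rewrite Hs; ring].
Qed.

Lemma signed_interval s D y : s * s = 1 ->
  ((s - 1) / 2 * D < y < (s + 1) / 2 * D <-> 0 < s * y < D).
Proof. intros Hs. destruct (sign_cases s Hs) as [-> | ->]; split; intros; lra. Qed.

Lemma Rabs_div_lt_1 a p : a ^ 2 < p ^ 2 -> Rabs (a / p) < 1.
Proof.
  intros H. assert (Hp : p <> 0) by (intros ->; nra).
  assert (E : a = (a / p) * p) by (field; exact Hp).
  assert (Hp2 : 0 < p ^ 2) by (apply pow2_gt_0; exact Hp).
  rewrite E, Rpow_mult_distr in H.
  assert (Hu : (a / p) ^ 2 < 1) by (apply (Rmult_lt_reg_r (p ^ 2)); lra).
  apply Rabs_def1; nra.
Qed.

Lemma exp_gt_1 t : 0 < t -> 1 < exp t.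
Proof. intros Ht. rewrite <- exp_0. now apply exp_increasing. Qed.

Lemma exp_lt_1 t : t < 0 -> exp t < 1.
Proof. intros Ht. rewrite <- exp_0. now apply exp_increasing. Qed.

Lemma exp_opp_mul_iff t a b : a = exp (- t) * b <-> b = exp t * a.
Proof.
  assert (E : exp t * exp (- t) = 1) by (rewrite exp_Ropp; field; apply Rgt_not_eq, exp_pos).
  split; intros ->.
  - rewrite <- Rmult_assoc, E. ring.
  - rewrite <- Rmult_assoc, (Rmult_comm (exp (- t))), E. ring.
Qed.

Lemma cosh_sqr x : cosh x ^ 2 = sinh x ^ 2 + 1.
Proof.
  unfold cosh, sinh. rewrite exp_Ropp.
  assert (0 < exp x) by apply exp_pos. field. lra.
Qed.

Lemma cosh_pos x : 0 < cosh x.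
Proof. unfold cosh. pose proof (exp_pos x). pose proof (exp_pos (- x)). lra. Qed.

Lemma cosh_ge_1 x : 1 <= cosh x.
Proof. pose proof (cosh_sqr x). pose proof (cosh_pos x). nra. Qed.

Lemma cosh_opp x : cosh (- x) = cosh x.
Proof. unfold cosh. rewrite Ropp_involutive. lra. Qed.

Lemma sinh_nonneg y : 0 <= y -> 0 <= sinh y.
Proof.
  intros Hy. unfold sinh.
  destruct (Rle_lt_or_eq_dec 0 y Hy) as [Hlt | <-].
  - assert (exp (- y) < exp y) by (apply exp_increasing; lra). lra.
  - rewrite Ropp_0. lra.
Qed.

Lemma Rabs_sinh_lt_cosh x : Rabs (sinh x) < cosh x.
Proof. pose proof (cosh_sqr x). pose proof (cosh_pos x). apply Rabs_def1; nra. Qed.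

Lemma cosh_lt_of_near x0 x : x0 - 1 < x < x0 + 1 -> cosh x < exp (x0 + 1) + exp (1 - x0).
Proof.
  intros Hx. unfold cosh.
  assert (exp x < exp (x0 + 1)) by (apply exp_increasing; lra).
  assert (exp (- x) < exp (1 - x0)) by (apply exp_increasing; lra).
  pose proof (exp_pos x). pose proof (exp_pos (- x)). lra.
Qed.

Lemma sinh_eq_iff y w : sinh y = w <-> y = arcsinh w.
Proof.
  split; [intros <-; now rewrite arcsinh_sinh | intros ->; apply sinh_arcsinh].
Qed.

Definition arcosh (w : R) : R := arcsinh (sqrt (w ^ 2 - 1)).

Lemma cosh_arcosh w : 1 <= w -> cosh (arcosh w) = w.
Proof.
  intros Hw. unfold arcosh.
  assert (E := cosh_sqr (arcsinh (sqrt (w ^ 2 - 1)))).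
  rewrite sinh_arcsinh, pow2_sqrt in E by nra.
  pose proof (cosh_pos (arcsinh (sqrt (w ^ 2 - 1)))). nra.
Qed.

Lemma arcosh_cosh y : 0 <= y -> arcosh (cosh y) = y.
Proof.
  intros Hy. unfold arcosh.
  replace (cosh y ^ 2 - 1) with (sinh y ^ 2) by (rewrite cosh_sqr; ring).
  rewrite sqrt_pow2 by now apply sinh_nonneg. apply arcsinh_sinh.
Qed.

Lemma arcosh_lt w v : 1 <= w -> w < v -> arcosh w < arcosh v.
Proof. intros Hw Hv. apply arcsinh_lt, sqrt_lt_1_alt. nra. Qed.

Lemma arcosh_pos w : 1 < w -> 0 < arcosh w.
Proof.
  intros Hw. replace 0 with (arcosh 1); [apply arcosh_lt; lra |].
  unfold arcosh. replace (1 ^ 2 - 1) with 0 by ring. rewrite sqrt_0. apply arcsinh_0.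
Qed.

Lemma cosh_eq_iff_branch s y w : s * s = 1 -> 1 <= w -> 0 < s * y ->
  (cosh y = w <-> y = s * arcosh w).
Proof.
  intros Hs Hw Hy.
  assert (Cs : cosh (s * y) = cosh y).
  { destruct (sign_cases s Hs) as [-> | ->]; [f_equal; ring |].
    replace (-1 * y) with (- y) by ring. apply cosh_opp. }
  split.
  - intros Hc. rewrite <- Hc, <- Cs, arcosh_cosh by lra.
    now rewrite sign_mul_sign.
  - intros ->. rewrite <- Cs.
    rewrite sign_mul_sign by exact Hs.
    now apply cosh_arcosh.
Qed.

Lemma sin_add_multiple_PI (n : Z) v : sin (v + IZR n * PI) = cos (IZR n * PI) * sin v.
Proof. rewrite sin_plus, (sin_eq_0_1 (IZR n * PI)) by (now exists n). ring. Qed.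

Lemma sin_branch y : Rabs (sin y) < 1 ->
  exists C0 s, s * s = 1 /\ (forall v, sin (v + C0) = s * sin v) /\
    C0 - PI / 2 < y < C0 + PI / 2.
Proof.
  intros Hy. pose proof PI_RGT_0 as Hpi.
  (* [n] is the integer nearest to [y / PI]. *)
  set (n := (up (y / PI + 1 / 2) - 1)%Z).
  assert (En : IZR n = IZR (up (y / PI + 1 / 2)) - 1) by (unfold n; now rewrite minus_IZR).
  assert (Ey : y / PI * PI = y) by (field; lra).
  destruct (archimed (y / PI + 1 / 2)) as [Hup1 Hup2].
  set (C0 := IZR n * PI).
  assert (Hs : cos C0 * cos C0 = 1).
  { pose proof (sin2_cos2 C0) as E. unfold Rsqr in E.
    rewrite (sin_eq_0_1 C0) in E by (now exists n). lra. }
  exists C0, (cos C0). split; [exact Hs |]. split; [intros v; apply sin_add_multiple_PI |].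
  assert (Hlow : C0 - PI / 2 <= y) by (unfold C0; nra).
  split; [| unfold C0; nra].
  destruct (Rle_lt_or_eq_dec _ _ Hlow) as [Hlt | Heq]; [exact Hlt |].
  exfalso. rewrite <- Heq in Hy.
  replace (C0 - PI / 2) with (- (PI / 2) + C0) in Hy by ring.
  unfold C0 in Hy. rewrite sin_add_multiple_PI, sin_neg, sin_PI2 in Hy.
  fold C0 in Hy. apply Rabs_def2 in Hy. nra.
Qed.

Lemma asin_sign s w : s * s = 1 -> asin (s * w) = s * asin w.
Proof.
  intros Hs. destruct (sign_cases s Hs) as [-> | ->].
  - now rewrite !Rmult_1_l.
  - replace (-1 * w) with (- w) by ring. rewrite asin_opp. ring.
Qed.

Lemma sin_eq_iff_branch C0 s y w : s * s = 1 -> (forall v, sin (v + C0) = s * sin v) ->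
  -1 < w < 1 -> C0 - PI / 2 < y < C0 + PI / 2 ->
  (sin y = w <-> y = C0 + s * asin w).
Proof.
  intros Hs Hshift Hw Hy.
  assert (Ey : sin y = s * sin (y - C0)) by (rewrite <- Hshift; f_equal; ring).
  assert (Hsw : -1 <= s * w <= 1) by (destruct (sign_cases s Hs) as [-> | ->]; lra).
  split.
  - intros Hsin.
    assert (E : sin (y - C0) = s * w) by (rewrite <- Hsin, Ey, sign_mul_sign by exact Hs; reflexivity).
    rewrite <- asin_sign, <- E, asin_sin by (exact Hs || lra). ring.
  - intros ->. rewrite Ey.
    replace (C0 + s * asin w - C0) with (asin (s * w)) by (rewrite asin_sign by exact Hs; ring).
    rewrite sin_asin by exact Hsw. now apply sign_mul_sign.
Qed.

Lemma is_derive_exp_1 t : is_derive exp t (1 * exp t).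
Proof. rewrite Rmult_1_l. apply is_derive_Reals, derivable_pt_lim_exp. Qed.

Lemma is_derive_cosh x : is_derive cosh x (sinh x).
Proof. apply is_derive_Reals, derivable_pt_lim_cosh. Qed.

Lemma is_derive_sinh x : is_derive sinh x (cosh x).
Proof. apply is_derive_Reals, derivable_pt_lim_sinh. Qed.

Lemma is_derive_sin x : is_derive sin x (cos x).
Proof. apply is_derive_Reals, derivable_pt_lim_sin. Qed.

Lemma is_derive_arcsinh w : is_derive arcsinh w (/ sqrt (w ^ 2 + 1)).
Proof. apply is_derive_Reals, derivable_pt_lim_arcsinh. Qed.

Lemma is_derive_arcosh w : 1 < w -> is_derive arcosh w (/ sqrt (w ^ 2 - 1)).
Proof.
  intros Hw. assert (Hq : 0 < sqrt (w ^ 2 - 1)) by (apply sqrt_lt_R0; nra).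
  assert (Dq : is_derive (fun v => sqrt (v ^ 2 - 1)) w (2 * w / (2 * sqrt (w ^ 2 - 1)))).
  { apply (is_derive_sqrt (fun v => v ^ 2 - 1)); [auto_derive; [exact I | ring] | nra]. }
  assert (D := is_derive_comp arcsinh _ w _ _ (is_derive_arcsinh _) Dq).
  replace (/ sqrt (w ^ 2 - 1)) with (2 * w / (2 * sqrt (w ^ 2 - 1)) * / sqrt (sqrt (w ^ 2 - 1) ^ 2 + 1)).
  - exact D.
  - rewrite pow2_sqrt by nra. replace (w ^ 2 - 1 + 1) with (w ^ 2) by ring.
    rewrite sqrt_pow2 by lra. field. lra.
Qed.

Lemma is_derive_asin w : -1 < w < 1 -> is_derive asin w (/ sqrt (1 - w ^ 2)).
Proof.
  intros Hw. apply is_derive_Reals.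
  destruct (derivable_pt_asin w Hw) as [l Hl] eqn:E.
  pose proof (derive_pt_asin w Hw) as D. rewrite E in D. simpl in D.
  replace (/ sqrt (1 - w ^ 2)) with l; [exact Hl|].
  rewrite D. unfold Rsqr. replace (w * w) with (w ^ 2) by ring. field.
  apply Rgt_not_eq, sqrt_lt_R0. nra.
Qed.

Lemma is_derive_signed_sqrt (q : R -> R) (s σ w : R) :
  s * s = 1 -> 0 < q w -> is_derive q w (2 * σ * w) ->
  is_derive (fun v => s * sqrt (q v)) w (σ * w / (s * sqrt (q w))).
Proof.
  intros Hs Hq Dq.
  assert (Hsq : 0 < sqrt (q w)) by (apply sqrt_lt_R0; exact Hq).
  assert (Hs0 : s <> 0) by (intros ->; lra).
  replace (σ * w / (s * sqrt (q w))) with (s * (2 * σ * w / (2 * sqrt (q w)))).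
  - apply is_derive_scal, is_derive_sqrt; assumption.
  - field_simplify_eq; [| split; lra]. transitivity (s * s * σ * w); [ring | rewrite Hs; ring].
Qed.

Section Separable_graph.

Variables (Φ P g g1 k : R -> R) (σ : R).
Hypothesis g_deriv : forall x, is_derive g x (g1 x).
Hypothesis g1_deriv : forall x, is_derive g1 x (σ * g x).
Hypothesis k_deriv : forall t, is_derive k t (σ * k t).

Lemma graph_MCF_separable a b e f :
  (forall x t, a < x < b -> e < t < f ->
     is_derive Φ (k t * g x) (/ P (k t * g x)) /\
     is_derive P (k t * g x) (σ * (k t * g x) / P (k t * g x)) /\
     (k t * g1 x) ^ 2 < P (k t * g x) ^ 2) ->
  graph_MCF (fun x t => Φ (k t * g x)) a b e f.
Proof.
  intros H.
  exists (fun x t => k t * g1 x / P (k t * g x)),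
    (fun x t => (k t * (σ * g x) * P (k t * g x)
                 - k t * g1 x * (k t * g1 x * (σ * (k t * g x) / P (k t * g x))))
                / P (k t * g x) ^ 2),
    (fun x t => σ * k t * g x / P (k t * g x)).
  intros x t Hx Ht.
  destruct (H x t Hx Ht) as (DΦ & DP & Hspace).
  assert (Hp : P (k t * g x) <> 0) by (intros Hp; rewrite Hp in Hspace; nra).
  assert (Dw : is_derive (fun z => k t * g z) x (k t * g1 x)) by now apply is_derive_scal.
  split; [|split; [|split; [|split]]].
  - exact (is_derive_comp Φ _ x _ _ DΦ Dw).
  - apply (is_derive_div (fun z => k t * g1 z) (fun z => P (k t * g z)));
      [apply is_derive_scal, g1_deriv | exact (is_derive_comp P _ x _ _ DP Dw) | exact Hp].
  - exact (is_derive_comp Φ (fun s => k s * g x) t _ _ DΦ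
             (is_derive_scal_l k t _ (g x) (k_deriv t))).
  - now apply Rabs_div_lt_1.
  - assert (Hd : P (k t * g x) ^ 2 - (k t * g1 x) ^ 2 <> 0) by lra.
    field; split; assumption.
Qed.

Lemma spacelike_MCF_chart (I : R -> Prop) (C : R -> R -> R -> Prop)
    (a b c d e f t0 x0 y0 : R) :
  a < x0 < b -> c < y0 < d -> e < t0 < f -> (forall t, e < t < f -> I t) ->
  (forall x t, a < x < b -> e < t < f ->
     c < Φ (k t * g x) < d /\
     is_derive Φ (k t * g x) (/ P (k t * g x)) /\
     is_derive P (k t * g x) (σ * (k t * g x) / P (k t * g x)) /\
     (k t * g1 x) ^ 2 < P (k t * g x) ^ 2 /\
     (forall y, c < y < d -> (C t x y <-> y = Φ (k t * g x)))) ->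
  exists (a b c d e f : R) (u : R -> R -> R),
    a < x0 < b /\ c < y0 < d /\ e < t0 < f /\
    (forall t, e < t < f -> I t) /\
    graph_MCF u a b e f /\
    (forall x t, a < x < b -> e < t < f -> c < u x t < d) /\
    (forall x y t, a < x < b -> c < y < d -> e < t < f ->
       (C t x y <-> y = u x t)).
Proof.
  intros Hx0 Hy0 Ht0 HI H.
  exists a, b, c, d, e, f, (fun x t => Φ (k t * g x)).
  split; [exact Hx0|]. split; [exact Hy0|]. split; [exact Ht0|]. split; [exact HI|].
  split; [|split].
  - apply graph_MCF_separable. intros x t Hx Ht.
    destruct (H x t Hx Ht) as (_ & DΦ & DP & Hspace & _). auto.
  - intros x t Hx Ht. apply (H x t Hx Ht).
  - intros x y t Hx Hy Ht. apply (H x t Hx Ht), Hy.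
Qed.

End Separable_graph.

Lemma spacelike_MCF_sinh_level (J : R -> Prop) (g g1 : R -> R) :
  (forall x, is_derive g x (g1 x)) -> (forall x, is_derive g1 x (g x)) ->
  (forall x, Rabs (g x) <= cosh x) ->
  (forall t, J t -> exists e f, e < t < f /\ forall s, e < s < f -> J s) ->
  (forall t x, J t -> (exp t * g1 x) ^ 2 < (exp t * g x) ^ 2 + 1) ->
  spacelike_MCF J (fun t x y => g x = exp (- t) * sinh y).
Proof.
  intros Dg Dg1 Hg J_open Hspace. split.
  - intros t _. exists 0, (arcsinh (exp t * g 0)).
    apply exp_opp_mul_iff, sinh_arcsinh.
  - intros t0 x0 y0 Jt0 H0.
    destruct (J_open t0 Jt0) as (e & f & Ht0 & HI).
    set (B := exp f * (exp (x0 + 1) + exp (1 - x0))).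
    assert (Hw : forall x t, x0 - 1 < x < x0 + 1 -> e < t < f -> - B < exp t * g x < B).
    { intros x t Hx Ht.
      assert (exp t < exp f) by (apply exp_increasing; lra).
      pose proof (exp_pos t). pose proof (cosh_lt_of_near x0 x Hx).
      pose proof (Hg x). pose proof (cosh_pos x).
      assert (Habs : Rabs (exp t * g x) < B).
      { rewrite Rabs_mult, (Rabs_right (exp t)) by lra. unfold B. nra. }
      apply Rabs_def2 in Habs. lra. }
    assert (Hrange : forall x t, x0 - 1 < x < x0 + 1 -> e < t < f ->
                       arcsinh (- B) < arcsinh (exp t * g x) < arcsinh B).
    { intros x t Hx Ht. destruct (Hw x t Hx Ht). split; now apply arcsinh_lt. }
    assert (Dg1' : forall x, is_derive g1 x (1 * g x)).
    { intros x. rewrite Rmult_1_l. apply Dg1. }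
    apply (spacelike_MCF_chart arcsinh (fun w => 1 * sqrt (w ^ 2 + 1)) g g1 exp 1
             Dg Dg1' is_derive_exp_1 J _ (x0 - 1) (x0 + 1) (arcsinh (- B)) (arcsinh B) e f).
    + lra.
    + rewrite exp_opp_mul_iff, sinh_eq_iff in H0. rewrite H0. apply Hrange; lra.
    + exact Ht0.
    + exact HI.
    + intros x t Hx Ht. split; [|split; [|split; [|split]]].
      * now apply Hrange.
      * rewrite Rmult_1_l. apply is_derive_arcsinh.
      * apply (is_derive_signed_sqrt (fun w => w ^ 2 + 1)); [ring | nra |].
        auto_derive; [exact I | ring].
      * rewrite Rmult_1_l, pow2_sqrt by nra. now apply Hspace, HI.
      * intros y _. now rewrite exp_opp_mul_iff, sinh_eq_iff.
Qed.

Lemma cosh_sinh_spacelike_MCF :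
  spacelike_MCF (fun _ => True) (fun t x y => cosh x = exp (- t) * sinh y).
Proof.
  apply (spacelike_MCF_sinh_level _ cosh sinh is_derive_cosh is_derive_sinh).
  - intros x. rewrite Rabs_right; [lra | left; apply cosh_pos].
  - intros t _. exists (t - 1), (t + 1). split; [lra | auto].
  - intros t x _. rewrite !Rpow_mult_distr, cosh_sqr.
    pose proof (pow2_ge_0 (exp t)). nra.
Qed.

Lemma sinh_sinh_spacelike_MCF :
  spacelike_MCF (fun t => t < 0) (fun t x y => sinh x = exp (- t) * sinh y).
Proof.
  apply (spacelike_MCF_sinh_level _ sinh cosh is_derive_sinh is_derive_cosh).
  - intros x. left. apply Rabs_sinh_lt_cosh.
  - intros t Ht. exists (t - 1), (t / 2). split; [lra | intros s Hs; lra].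
  - intros t x Ht. rewrite !Rpow_mult_distr, cosh_sqr.
    pose proof (exp_lt_1 t Ht).
    pose proof (exp_pos t). pose proof (pow2_ge_0 (sinh x)). nra.
Qed.

Lemma cosh_cosh_spacelike_MCF :
  spacelike_MCF (fun t => 0 < t) (fun t x y => cosh x = exp (- t) * cosh y).
Proof.
  split.
  - intros t Ht. exists 0, (arcosh (exp t)).
    apply exp_opp_mul_iff. rewrite cosh_arcosh, cosh_0 by (left; now apply exp_gt_1). ring.
  - intros t0 x0 y0 Ht0 H0. rewrite exp_opp_mul_iff in H0.
    set (B := exp (t0 + 1) * (exp (x0 + 1) + exp (1 - x0))).
    set (D := arcosh B).
    assert (Hw : forall x t, x0 - 1 < x < x0 + 1 -> t0 / 2 < t < t0 + 1 ->
                   1 < exp t * cosh x < B).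
    { intros x t Hx Ht.
      assert (exp t < exp (t0 + 1)) by (apply exp_increasing; lra).
      pose proof (exp_gt_1 t ltac:(lra)). pose proof (cosh_ge_1 x).
      pose proof (cosh_lt_of_near x0 x Hx). unfold B. split; nra. }
    assert (Hrange : forall x t, x0 - 1 < x < x0 + 1 -> t0 / 2 < t < t0 + 1 ->
                       0 < arcosh (exp t * cosh x) < D).
    { intros x t Hx Ht. destruct (Hw x t Hx Ht).
      split; [now apply arcosh_pos | apply arcosh_lt; lra]. }
    assert (Hs : exists s, s * s = 1 /\ 0 < s * y0).
    { destruct (Rtotal_order 0 y0) as [Hy | [<- | Hy]].
      - exists 1. split; lra.
      - destruct (Hw x0 t0 ltac:(lra) ltac:(lra)). rewrite cosh_0 in H0. lra.
      - exists (-1). split; lra. }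
    destruct Hs as (s & Hs & Hsy0).
    assert (Dsinh : forall x, is_derive sinh x (1 * cosh x)).
    { intros x. rewrite Rmult_1_l. apply is_derive_sinh. }
    apply (spacelike_MCF_chart (fun w => s * arcosh w) (fun w => s * sqrt (w ^ 2 - 1))
             cosh sinh exp 1 is_derive_cosh Dsinh is_derive_exp_1 _ _
             (x0 - 1) (x0 + 1) ((s - 1) / 2 * D) ((s + 1) / 2 * D) (t0 / 2) (t0 + 1)).
    + lra.
    + assert (Hy0 : y0 = s * arcosh (exp t0 * cosh x0)).
      { apply cosh_eq_iff_branch; [exact Hs | left; apply Hw; lra | exact Hsy0 | exact H0]. }
      apply signed_interval; [exact Hs |].
      rewrite Hy0, sign_mul_sign by exact Hs. apply Hrange; lra.
    + lra.
    + intros t Ht. lra.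
    + intros x t Hx Ht. destruct (Hw x t Hx Ht) as [Hw1 Hw2].
      split; [|split; [|split; [|split]]].
      * apply signed_interval; [exact Hs |].
        rewrite sign_mul_sign by exact Hs. now apply Hrange.
      * rewrite <- sign_mul_inv by exact Hs.
        now apply is_derive_scal, is_derive_arcosh.
      * apply (is_derive_signed_sqrt (fun w => w ^ 2 - 1)); [exact Hs | nra |].
        auto_derive; [exact I | ring].
      * rewrite sqr_signed_sqrt by (exact Hs || nra).
        rewrite !Rpow_mult_distr, cosh_sqr.
        pose proof (exp_gt_1 t ltac:(lra)). pose proof (pow2_ge_0 (sinh x)). nra.
      * intros y Hy. apply signed_interval in Hy; [| exact Hs].
        rewrite exp_opp_mul_iff. apply cosh_eq_iff_branch; lra.
Qed.

Lemma sin_sin_spacelike_MCF :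
  spacelike_MCF (fun t => 0 < t) (fun t x y => sin y = exp (- t) * sin x).
Proof.
  split.
  - intros t _. exists 0, 0. rewrite sin_0. ring.
  - intros t0 x0 y0 Ht0 H0.
    assert (Hw : forall x t, 0 < t -> -1 < exp (- t) * sin x < 1).
    { intros x t Ht.
      pose proof (exp_lt_1 (- t) ltac:(lra)).
      pose proof (exp_pos (- t)). pose proof (SIN_bound x). split; nra. }
    destruct (sin_branch y0) as (C0 & s & Hs & Hshift & Hy0).
    { rewrite H0. destruct (Hw x0 t0 Ht0). now apply Rabs_def1. }
    assert (Dcos : forall x, is_derive cos x (-1 * sin x)).
    { intros x. replace (-1 * sin x) with (- sin x) by ring.
      apply is_derive_Reals, derivable_pt_lim_cos. }
    assert (Dk : forall t, is_derive (fun s => exp (- s)) t (-1 * exp (- t))).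
    { intros t. auto_derive; [exact I | ring]. }
    apply (spacelike_MCF_chart (fun w => C0 + s * asin w) (fun w => s * sqrt (1 - w ^ 2))
             sin cos (fun t => exp (- t)) (-1)
             is_derive_sin Dcos Dk _ _
             (x0 - 1) (x0 + 1) (C0 - PI / 2) (C0 + PI / 2) (t0 / 2) (t0 + 1)).
    + lra.
    + exact Hy0.
    + lra.
    + intros t Ht. lra.
    + intros x t Hx Ht. destruct (Hw x t ltac:(lra)) as [Hw1 Hw2].
      split; [|split; [|split; [|split]]].
      * pose proof (asin_bound_lt _ (conj Hw1 Hw2)).
        destruct (sign_cases s Hs) as [-> | ->]; lra.
      * rewrite <- sign_mul_inv by exact Hs.
        rewrite <- (Rplus_0_l (s * _)).
        apply (is_derive_plus (fun _ => C0) (fun w => s * asin w)).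
        -- exact (is_derive_const C0 _).
        -- now apply is_derive_scal, is_derive_asin.
      * apply (is_derive_signed_sqrt (fun w => 1 - w ^ 2)); [exact Hs | nra |].
        auto_derive; [exact I | ring].
      * rewrite sqr_signed_sqrt by (exact Hs || nra).
        pose proof (exp_lt_1 (- t) ltac:(lra)). pose proof (exp_pos (- t)). pose proof (sin2_cos2 x) as E. unfold Rsqr in E.
        rewrite !Rpow_mult_distr. nra.
      * intros y Hy. now apply sin_eq_iff_branch.
Qed.

Theorem theorem11p1 :
  spacelike_MCF (fun t => 0 < t)
    (fun t x y => cosh x = exp (- t) * cosh y) /\
  spacelike_MCF (fun _ => True)
    (fun t x y => cosh x = exp (- t) * sinh y) /\
  spacelike_MCF (fun t => t < 0)
    (fun t x y => sinh x = exp (- t) * sinh y) /\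
  spacelike_MCF (fun t => 0 < t)
    (fun t x y => sin y = exp (- t) * sin x).
Proof.
  split; [exact cosh_cosh_spacelike_MCF |].
  split; [exact cosh_sinh_spacelike_MCF |].
  split; [exact sinh_sinh_spacelike_MCF |].
  exact sin_sin_spacelike_MCF.
Qed.
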